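(* Let $\alpha\in(0,1]$, $\mu\in(0,1]$, $\lambda>0$, and define $(c^{(\mu)}_k)_{k\ge0}$ by $\sum_{k\ge0}c^{(\mu)}_ku^k=\Big(\frac{(1-u)^\alpha}{\lambda+(1-u)^\alpha}\Big)^\mu$ for $|u|<1$. Then $c^{(\mu)}_0=(\lambda+1)^{-\mu}>0$, $c^{(\mu)}_k<0$ for all $k\ge1$, and $\sum_{k\ge0}c^{(\mu)}_k=0$. Equivalently, the upper triangular circulant matrix $[g_{ML,\alpha}(\mathcal L)]^\mu=\mathcal L^{\alpha\mu}(\lambda\mathbf 1+\mathcal L^\alpha)^{-\mu}$, which for $\mu\in(0,1)$ equals $-\frac1{\Gamma(-\mu)}\int_0^\infty(\mathbf 1-e^{-\tau g_{ML,\alpha}(\mathcal L)})\tau^{-\mu-1}d\tau$, satisfies the good Laplacian properties (zero row sums, positive diagonal, non-positive off-diagonal entries), and $\delta_{mn}-[g_{ML,\alpha}(\mathcal L)]^\mu_{m,n}/c^{(\mu)}_0$ is a transition matrix with strictly positive entries for $n>m$.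
   Context: $\mathcal L$ is the $\mathbb Z\times\mathbb Z$ matrix $\mathcal L_{mn}=\delta_{mn}-\delta_{m,n-1}$; a matrix function of $\mathcal L$ with generating function $F(1-u)=\sum_kf_ku^k$ is the upper triangular circulant matrix with entries $[F]_{m,n}=f_{n-m}$ ($n\ge m$), $0$ otherwise. $g_{ML,\alpha}(\mathcal L)$ has generating function $\frac{(1-u)^\alpha}{\lambda+(1-u)^\alpha}$. *)

From Stdlib Require Export Reals ZArith.
From Coquelicot Require Export Coquelicot.
Open Scope R_scope.

(* Generating function u |-> ((1-u)^alpha / (lambda + (1-u)^alpha))^mu,
   for real u with |u| < 1 (so 1 - u > 0 and all real powers are of
   positive bases). *)
Definition gen_fun (alpha mu lambda u : R) : R :=
  Rpower (Rpower (1 - u) alpha / (lambda + Rpower (1 - u) alpha)) mu.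

Definition is_gen_coeffs (alpha mu lambda : R) (c : nat -> R) : Prop :=
  forall u : R, Rabs u < 1 -> is_series (fun k => c k * u ^ k) (gen_fun alpha mu lambda u).

Definition circ_mx (c : nat -> R) (m n : Z) : R :=
  if (m <=? n)%Z then c (Z.to_nat (n - m)) else 0.

Definition kron (m n : Z) : R := if Z.eq_dec m n then 1 else 0.

(* Good Laplacian properties of a Z x Z upper triangular matrix A:
   zero row sums (the row m is supported on n >= m), positive diagonal,
   non-positive off-diagonal entries. *)
Definition good_laplacian (A : Z -> Z -> R) : Prop :=
  (forall m n : Z, (n < m)%Z -> A m n = 0) /\
  (forall m : Z, is_series (fun j : nat => A m (m + Z.of_nat j)%Z) 0) /\
  (forall m : Z, 0 < A m m) /\
  (forall m n : Z, m <> n -> A m n <= 0).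

Definition transition_mx (P : Z -> Z -> R) : Prop :=
  (forall m n : Z, (n < m)%Z -> P m n = 0) /\
  (forall m n : Z, 0 <= P m n) /\
  (forall m : Z, is_series (fun j : nat => P m (m + Z.of_nat j)%Z) 1).

(* Put r = 1 / (lambda + 1) and s = (1 - u)^alpha.  Then
     s / (lambda + s) = r (1 - M (1 - s)),   M(y) = (1 - r) y / (1 - r y),
   so the symbol equals r^mu (1 - P(u)) with
     P(u) = 1 - (1 - Q(u))^mu,   Q(u) = M (1 - (1 - u)^alpha).
   The maps y |-> 1 - (1 - y)^b (0 < b <= 1, binomial series) and M have
   power series with nonnegative coefficients and no constant term, hence so
   do their composites Q and P; the coefficients of P are even positive from
   degree 1 on, because they dominate mu q_k and q_k dominates (1 - r) r^(k-1)
   alpha^k.  Thus c_0 = r^mu and c_k = - r^mu p_k < 0 for k >= 1.  Since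
   P(x) -> 1 as x -> 1-, Abel's theorem for nonnegative coefficients gives
   sum p_k = 1, i.e. sum c_k = 0.  The matrix statements follow from this sign
   pattern alone. *)

From Stdlib Require Import Lra Lia.

Lemma is_series_partial_sums (a : nat -> R) (l : R) :
  is_series a l <-> is_lim_seq (fun N => sum_f_R0 a N) l.
Proof.
  split; intro H.
  - apply is_lim_seq_ext with (sum_n a); [apply sum_n_Reals | exact H].
  - assert (Hsum : is_lim_seq (sum_n a) l).
    { apply is_lim_seq_ext with (fun N => sum_f_R0 a N); [|exact H].
      intro N. symmetry. apply sum_n_Reals. }
    exact Hsum.
Qed.

Lemma is_series_finite_support (a : nat -> R) (N : nat) :
  (forall j, (N < j)%nat -> a j = 0) -> is_series a (sum_f_R0 a N).
Proof.
  intro Hzero. apply is_series_partial_sums.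
  apply is_lim_seq_ext_loc with (fun _ => sum_f_R0 a N); [|apply is_lim_seq_const].
  exists N. intros n Hn. induction Hn as [|n Hn IH]; [reflexivity|].
  simpl. rewrite <- IH, Hzero by lia. ring.
Qed.

Definition ps_one (k : nat) : R := match k with O => 1 | S _ => 0 end.

Lemma ps_one_series (x : R) : is_series (fun k => ps_one k * x ^ k) 1.
Proof.
  assert (Hfin := is_series_finite_support (fun k => ps_one k * x ^ k) 0).
  replace (sum_f_R0 _ 0) with 1 in Hfin by (simpl; ring).
  apply Hfin. intros [|j] Hj; [lia | simpl; ring].
Qed.

Lemma ps_one_sum : is_series ps_one 1.
Proof.
  eapply is_series_ext; [|exact (ps_one_series 1)].
  intro k. cbv beta. now rewrite pow1, Rmult_1_r.
Qed.

Lemma series_le_of_partial_sums (a : nat -> R) (l B : R) :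
  is_series a l -> (forall N, sum_f_R0 a N <= B) -> l <= B.
Proof.
  intros Hl Hbound. apply is_series_partial_sums in Hl.
  exact (is_lim_seq_le _ _ _ _ Hbound Hl (is_lim_seq_const B)).
Qed.

Section NonnegativeSeries.

Variable a : nat -> R.
Hypothesis a_nonneg : forall n, 0 <= a n.

Lemma sum_f_R0_term_le (j N : nat) : (j <= N)%nat -> a j <= sum_f_R0 a N.
Proof.
  intro HjN. induction HjN as [|N _ IH]; simpl.
  - destruct j; simpl; [lra|].
    pose proof (cond_pos_sum a j a_nonneg). lra.
  - pose proof (a_nonneg (S N)). lra.
Qed.

Lemma nonneg_partial_sum_le (l : R) (N : nat) :
  is_series a l -> sum_f_R0 a N <= l.
Proof.
  intro Hl. apply is_lim_seq_incr_compare; [now apply is_series_partial_sums|].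
  intro n. simpl. pose proof (a_nonneg (S n)). lra.
Qed.

Lemma nonneg_term_le (l : R) (n : nat) : is_series a l -> a n <= l.
Proof.
  intro Hl. eapply Rle_trans; [apply (sum_f_R0_term_le n n); lia|].
  now apply nonneg_partial_sum_le.
Qed.

Lemma Series_nonneg : ex_series a -> 0 <= Series a.
Proof.
  intro Hex. apply Rle_trans with (a 0%nat); [apply a_nonneg|].
  apply nonneg_term_le. now apply Series_correct.
Qed.

Lemma nonneg_bounded_series (B : R) :
  (forall N, sum_f_R0 a N <= B) -> ex_series a /\ Series a <= B.
Proof.
  intro Hbound.
  destruct (ex_finite_lim_seq_incr (fun N => sum_f_R0 a N) B) as [l Hl];
    [intro n; simpl; pose proof (a_nonneg (S n)); lra | exact Hbound |].
  apply is_series_partial_sums in Hl.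
  split; [now exists l|].
  rewrite (is_series_unique a l Hl). exact (series_le_of_partial_sums a l B Hl Hbound).
Qed.

End NonnegativeSeries.

Lemma Series_sum_f_R0 (e : nat -> nat -> R) (N : nat) :
  (forall k, ex_series (fun j => e j k)) ->
  ex_series (fun j => sum_f_R0 (e j) N) /\
  Series (fun j => sum_f_R0 (e j) N) = sum_f_R0 (fun k => Series (fun j => e j k)) N.
Proof.
  intro Hcols. induction N as [|N [Hex Hsum]]; simpl; [split; [apply Hcols | reflexivity]|].
  split; [now apply (ex_series_plus (fun j => sum_f_R0 (e j) N) (fun j => e j (S N)))|].
  rewrite Series_plus by auto. now rewrite Hsum.
Qed.

Lemma tonelli (e : nat -> nat -> R) (row : nat -> R) (S : R) :
  (forall j k, 0 <= e j k) -> (forall j, is_series (e j) (row j)) -> is_series row S ->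
  is_series (fun k => Series (fun j => e j k)) S.
Proof.
  intros He Hrow HS.
  set (col := fun k => Series (fun j => e j k)).
  assert (Hcols : forall k, ex_series (fun j => e j k)).
  { intro k. apply (@ex_series_le R_AbsRing R_CompleteNormedModule _ row); [|now exists S].
    intro j. rewrite Rabs_pos_eq by apply He. exact (nonneg_term_le _ (He j) _ k (Hrow j)). }
  assert (Hrows : forall j, ex_series (e j)) by (intro j; now exists (row j)).
  assert (Hcol_nonneg : forall k, 0 <= col k).
  { intro k. apply Series_nonneg; [intro j; apply He | apply Hcols]. }
  assert (Hupper : forall N, sum_f_R0 col N <= S).
  { intro N. destruct (Series_sum_f_R0 e N Hcols) as [Hex Hsum].
    unfold col. rewrite <- Hsum, <- (is_series_unique row S HS).
    apply Series_le; [|now exists S]. intro j. split.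
    - apply cond_pos_sum. intro k. apply He.
    - apply (nonneg_partial_sum_le _ (He j)). apply Hrow. }
  destruct (nonneg_bounded_series col Hcol_nonneg S Hupper) as [Hex_col Hle].
  assert (Hlower : S <= Series col).
  { apply (series_le_of_partial_sums row S _ HS). intro M.
    destruct (Series_sum_f_R0 (fun k j => e j k) M Hrows) as [Hex Hsum].
    replace (sum_f_R0 row M) with (sum_f_R0 (fun j => Series (fun k => e j k)) M)
      by (apply sum_eq; intros j _; apply is_series_unique, Hrow).
    rewrite <- Hsum. apply Series_le; [|exact Hex_col]. intro k. split.
    - apply cond_pos_sum. intro j. apply He.
    - apply (nonneg_partial_sum_le (fun j => e j k) (fun j => He j k)).
      apply Series_correct, Hcols. }
  replace S with (Series col) by lra. now apply Series_correct.
Qed.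

(* Fubini for absolutely convergent double series, obtained from [tonelli]
   applied to [|e|] and to [|e| + e]. *)
Lemma fubini (e : nat -> nat -> R) (row_abs : nat -> R) (S_abs : R) :
  (forall j, is_series (fun k => Rabs (e j k)) (row_abs j)) -> is_series row_abs S_abs ->
  is_series (fun k => Series (fun j => e j k)) (Series (fun j => Series (e j))).
Proof.
  intros Hrow HS.
  assert (Hrows : forall j, ex_series (e j)).
  { intro j. apply ex_series_Rabs. now exists (row_abs j). }
  assert (Hrow_sums : ex_series (fun j => Series (e j))).
  { apply (@ex_series_le R_AbsRing R_CompleteNormedModule _ row_abs); [|now exists S_abs].
    intro j. rewrite <- (is_series_unique _ _ (Hrow j)).
    apply Series_Rabs. now exists (row_abs j). }
  assert (Habs := tonelli (fun j k => Rabs (e j k)) row_abs S_abs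
                    (fun j k => Rabs_pos _) Hrow HS).
  assert (Hshift_nonneg : forall j k, 0 <= Rabs (e j k) + e j k).
  { intros j k. pose proof (Rle_abs (- e j k)). rewrite Rabs_Ropp in *. lra. }
  assert (Hshift := tonelli (fun j k => Rabs (e j k) + e j k)
                      (fun j => row_abs j + Series (e j))
                      (S_abs + Series (fun j => Series (e j))) Hshift_nonneg
                      (fun j => is_series_plus _ _ _ _ (Hrow j) (Series_correct _ (Hrows j)))
                      (is_series_plus _ _ _ _ HS (Series_correct _ Hrow_sums))).
  assert (Hcol : forall k, Series (fun j => e j k) =
      Series (fun j => Rabs (e j k) + e j k) - Series (fun j => Rabs (e j k))).
  { intro k.
    assert (Hex_abs : ex_series (fun j => Rabs (e j k))).
    { apply (@ex_series_le R_AbsRing R_CompleteNormedModule _ row_abs); [|now exists S_abs]. intro j.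
      rewrite Rabs_Rabsolu. exact (nonneg_term_le _ (fun k => Rabs_pos (e j k)) _ k (Hrow j)). }
    assert (Hex_col : ex_series (fun j => e j k)) by now apply ex_series_Rabs.
    rewrite Series_plus by auto. ring. }
  replace (Series (fun j => Series (e j)))
    with ((S_abs + Series (fun j => Series (e j))) - S_abs) by ring.
  eapply is_series_ext; [|exact (is_series_minus _ _ _ _ Hshift Habs)].
  intro k. simpl. rewrite Hcol. reflexivity.
Qed.

(** Powers and composition of power series with nonnegative coefficients *)

Fixpoint ps_pow (t : nat -> R) (j : nat) : nat -> R :=
  match j with O => ps_one | S j' => PS_mult t (ps_pow t j') end.

Lemma nonneg_ps_abs_le (t : nat -> R) (T : R -> R) (x : R) :
  (forall k, 0 <= t k) -> is_series (fun k => t k * x ^ k) (T x) ->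
  is_series (fun k => t k * Rabs x ^ k) (T (Rabs x)) -> Rabs (T x) <= T (Rabs x).
Proof.
  intros Ht Hx Habs.
  assert (Hterm : forall k, Rabs (t k * x ^ k) = t k * Rabs x ^ k).
  { intro k. now rewrite Rabs_mult, <- RPow_abs, (Rabs_pos_eq (t k)). }
  rewrite <- (is_series_unique _ _ Hx), <- (is_series_unique _ _ Habs), <- (Series_ext _ _ Hterm).
  apply Series_Rabs. exists (T (Rabs x)). now apply (is_series_ext _ _ _ (fun k => eq_sym (Hterm k))).
Qed.

Section PowerSeriesComposition.

Variables (t : nat -> R) (T : R -> R) (a : nat -> R) (A : R -> R).
Hypothesis t_nonneg : forall k, 0 <= t k.
Hypothesis t_0 : t 0%nat = 0.
Hypothesis T_series : forall x, Rabs x < 1 -> is_series (fun k => t k * x ^ k) (T x).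
Hypothesis a_nonneg : forall j, 0 <= a j.
Hypothesis A_series : forall y, Rabs y < 1 -> is_series (fun j => a j * y ^ j) (A y).
Hypothesis T_lt_1 : forall x, 0 <= x < 1 -> T x < 1.

Lemma ps_pow_nonneg (j k : nat) : 0 <= ps_pow t j k.
Proof.
  revert k. induction j as [|j IH]; intro k; simpl.
  - destruct k; simpl; lra.
  - apply cond_pos_sum. intro i. now apply Rmult_le_pos.
Qed.

Lemma ps_pow_one (k : nat) : ps_pow t 1 k = t k.
Proof.
  simpl. unfold PS_mult. destruct k as [|k]; [simpl; ring|].
  rewrite tech5, Nat.sub_diag, sum_eq_R0; [simpl; ring|].
  intros i Hi. replace (S k - i)%nat with (S (k - i)) by lia. simpl. ring.
Qed.

Lemma ps_pow_below_degree (j k : nat) : (k < j)%nat -> ps_pow t j k = 0.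
Proof.
  revert k. induction j as [|j IH]; intros k Hk; [lia|].
  simpl. unfold PS_mult. apply sum_eq_R0. intros [|i] Hi.
  - rewrite t_0. ring.
  - rewrite IH by lia. ring.
Qed.

Lemma ps_pow_diag (j : nat) : ps_pow t j j = t 1%nat ^ j.
Proof.
  induction j as [|j IH]; [reflexivity|].
  simpl. unfold PS_mult. rewrite decomp_sum by lia. simpl pred.
  rewrite t_0, Rmult_0_l, Rplus_0_l.
  destruct j as [|j]; [simpl; ring|].
  rewrite decomp_sum by lia. simpl pred.
  rewrite sum_eq_R0.
  - replace (S (S j) - 1)%nat with (S j) by lia. rewrite IH. simpl. ring.
  - intros i Hi. rewrite ps_pow_below_degree by lia. ring.
Qed.

Lemma ps_pow_series (j : nat) (x : R) :
  Rabs x < 1 -> is_series (fun k => ps_pow t j k * x ^ k) (T x ^ j).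
Proof.
  revert x. induction j as [|j IH]; intros x Hx; [apply ps_one_series|].
  assert (Hax : Rabs (Rabs x) < 1) by now rewrite Rabs_Rabsolu.
  assert (Habs : forall (c : nat -> R) (C : R),
             (forall k, 0 <= c k) -> is_series (fun k => c k * Rabs x ^ k) C ->
             ex_series (fun k => Rabs (c k * x ^ k))).
  { intros c C Hc HC. exists C. eapply is_series_ext; [|exact HC].
    intro k. now rewrite Rabs_mult, <- RPow_abs, (Rabs_pos_eq (c k)). }
  assert (Hprod := is_series_mult _ _ _ _ (T_series x Hx) (IH x Hx)
                     (Habs _ _ t_nonneg (T_series _ Hax))
                     (Habs _ _ (ps_pow_nonneg j) (IH _ Hax))).
  eapply is_series_ext; [|exact Hprod].
  intro n. simpl. unfold PS_mult. rewrite (Rmult_comm _ (x ^ n)), scal_sum.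
  apply sum_eq. intros i Hi.
  replace (x ^ n) with (x ^ i * x ^ (n - i)) by (rewrite <- pow_add; f_equal; lia).
  ring.
Qed.

(* Coefficients of the composite series [A (T u)]: the finite sum
   [sum_(j <= k) a_j [u^k] T(u)^j]. *)
Definition ps_comp (k : nat) : R := sum_f_R0 (fun j => a j * ps_pow t j k) k.

Lemma ps_comp_nonneg (k : nat) : 0 <= ps_comp k.
Proof.
  apply cond_pos_sum. intro j. apply Rmult_le_pos; [apply a_nonneg | apply ps_pow_nonneg].
Qed.

Lemma ps_comp_0 : ps_comp 0 = a 0%nat.
Proof. unfold ps_comp. simpl. ring. Qed.

Lemma ps_comp_ge (j k : nat) : (j <= k)%nat -> a j * ps_pow t j k <= ps_comp k.
Proof.
  intro Hjk. apply (sum_f_R0_term_le (fun j => a j * ps_pow t j k)); [|exact Hjk].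
  intro i. apply Rmult_le_pos; [apply a_nonneg | apply ps_pow_nonneg].
Qed.

Lemma inner_series_disc (u : R) : Rabs u < 1 -> Rabs (T u) < 1.
Proof.
  intro Hu. assert (Hau : Rabs (Rabs u) < 1) by now rewrite Rabs_Rabsolu.
  apply Rle_lt_trans with (T (Rabs u)).
  - exact (nonneg_ps_abs_le t T u t_nonneg (T_series u Hu) (T_series _ Hau)).
  - apply T_lt_1. split; [apply Rabs_pos | exact Hu].
Qed.

(* Expanding [A (T u) = sum_j a_j (sum_k [u^k] T(u)^j u^k)] and exchanging the
   sums (the double series converges absolutely, with sum [A (T |u|)]). *)
Lemma ps_comp_series (u : R) :
  Rabs u < 1 -> is_series (fun k => ps_comp k * u ^ k) (A (T u)).
Proof.
  intro Hu.
  assert (Hau : Rabs (Rabs u) < 1) by now rewrite Rabs_Rabsolu.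
  set (e := fun j k => a j * ps_pow t j k * u ^ k).
  assert (Hrow : forall y, Rabs y < 1 -> forall j,
             is_series (fun k => a j * ps_pow t j k * y ^ k) (a j * T y ^ j)).
  { intros y Hy j. eapply is_series_ext; [|exact (is_series_scal_l (a j) _ _ (ps_pow_series j y Hy))].
    intro k. unfold scal; simpl; unfold mult; simpl. ring. }
  assert (Hfub : is_series (fun k => Series (fun j => e j k)) (Series (fun j => Series (e j)))).
  { apply (fubini e (fun j => a j * T (Rabs u) ^ j) (A (T (Rabs u)))).
    - intro j. eapply is_series_ext; [|exact (Hrow _ Hau j)].
      intro k. unfold e. rewrite !Rabs_mult, <- RPow_abs, (Rabs_pos_eq (a j)) by apply a_nonneg.
      now rewrite (Rabs_pos_eq (ps_pow t j k)) by apply ps_pow_nonneg.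
    - apply A_series, inner_series_disc, Hau. }
  replace (A (T u)) with (Series (fun j => Series (e j))).
  - eapply is_series_ext; [|exact Hfub]. intro k; cbv beta.
    assert (Hcol : forall j, (k < j)%nat -> e j k = 0).
    { intros j Hj. unfold e. rewrite ps_pow_below_degree by lia. ring. }
    rewrite (is_series_unique _ _ (is_series_finite_support (fun j => e j k) k Hcol)).
    unfold e, ps_comp. rewrite (Rmult_comm _ (u ^ k)), scal_sum. apply sum_eq. intros; ring.
  - rewrite <- (is_series_unique _ _ (A_series _ (inner_series_disc u Hu))).
    apply Series_ext. intro j. apply is_series_unique, Hrow, Hu.
Qed.

End PowerSeriesComposition.

Lemma Rpower_pos (x y : R) : 0 < Rpower x y.
Proof. apply exp_pos. Qed.

Lemma Rpower_base_1 (y : R) : Rpower 1 y = 1.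
Proof. unfold Rpower. now rewrite ln_1, Rmult_0_r, exp_0. Qed.

Lemma Rpower_inv_base (x y : R) : 0 < x -> Rpower (/ x) y = Rpower x (- y).
Proof. intro Hx. unfold Rpower. rewrite ln_Rinv by exact Hx. f_equal. ring. Qed.

(** The binomial series of [(1 - x)^b] *)

Lemma PSeries_inside (a : nat -> R) (x : R) :
  Rbar_lt (Rabs x) (CV_radius a) -> is_series (fun k => a k * x ^ k) (PSeries a x).
Proof. intro Hx. apply is_pseries_R, PSeries_correct, CV_radius_inside, Hx. Qed.

Lemma zero_derivative_constant (h : R -> R) (x : R) :
  (forall y, Rabs y < 1 -> derivable_pt_lim h y 0) -> Rabs x < 1 -> h x = h 0.
Proof.
  intros Hd Hx. apply Rabs_def2 in Hx.
  destruct (Rtotal_order x 0) as [Hneg | [-> | Hpos]]; [| reflexivity |].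
  - destruct (MVT_cor2 h (fun _ => 0) x 0 Hneg) as [c [Hc _]];
      [intros c Hc; apply Hd, Rabs_def1; lra | lra].
  - destruct (MVT_cor2 h (fun _ => 0) 0 x Hpos) as [c [Hc _]];
      [intros c Hc; apply Hd, Rabs_def1; lra | lra].
Qed.

(* [binom_coef b k] is the coefficient of [x^k] in [(1 - x)^b],
   namely [(-1)^k (b choose k)]. *)
Fixpoint binom_coef (b : R) (k : nat) : R :=
  match k with
  | O => 1
  | S k' => binom_coef b k' * (INR k' - b) / INR (S k')
  end.

Lemma binom_coef_1 (b : R) : binom_coef b 1 = - b.
Proof. simpl. field. Qed.

(* The recurrence that makes [sum binom_coef b k x^k] solve
   [(1 - x) f' = - b f]. *)
Lemma binom_coef_succ (b : R) (n : nat) :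
  INR (S n) * binom_coef b (S n) = binom_coef b n * (INR n - b).
Proof.
  cbn [binom_coef]. assert (0 < INR (S n)) by apply lt_0_INR, Nat.lt_0_succ.
  field. lra.
Qed.

Lemma binom_coef_bounded (b : R) (k : nat) : -1 <= b <= 1 -> Rabs (binom_coef b k) <= 1.
Proof.
  intro Hb. induction k as [|k IH]; cbn [binom_coef]; [rewrite Rabs_R1; lra|].
  assert (HS : 0 < INR (S k)) by apply lt_0_INR, Nat.lt_0_succ.
  assert (Hfactor : Rabs ((INR k - b) / INR (S k)) <= 1).
  { unfold Rdiv. rewrite Rabs_mult, Rabs_inv, (Rabs_pos_eq (INR (S k))) by lra.
    apply (Rmult_le_reg_r (INR (S k))); [exact HS|].
    rewrite Rmult_assoc, Rinv_l, S_INR, Rmult_1_r, Rmult_1_l by lra.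
    pose proof (pos_INR k). apply Rabs_le. lra. }
  unfold Rdiv in *. rewrite Rmult_assoc, Rabs_mult, <- (Rmult_1_l 1).
  apply Rmult_le_compat; [apply Rabs_pos | apply Rabs_pos | exact IH | exact Hfactor].
Qed.

Lemma binom_coef_nonpos (b : R) (k : nat) : 0 <= b <= 1 -> (1 <= k)%nat -> binom_coef b k <= 0.
Proof.
  intros Hb Hk. induction Hk as [|k Hk IH]; [rewrite binom_coef_1; lra|].
  cbn [binom_coef]. assert (HS : 0 < INR (S k)) by apply lt_0_INR, Nat.lt_0_succ.
  assert (1 <= INR k) by apply (le_INR 1), Hk.
  unfold Rdiv. apply Rmult_le_0_r; [apply Rmult_le_0_r; [exact IH | lra]|].
  left. now apply Rinv_0_lt_compat.
Qed.

Lemma binom_radius (b : R) : -1 <= b <= 1 -> Rbar_le 1 (CV_radius (binom_coef b)).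
Proof.
  intro Hb. apply (proj1 (CV_radius_bounded (binom_coef b))).
  exists 1. intro n. rewrite pow1, Rmult_1_r. now apply binom_coef_bounded.
Qed.

Section BinomialSeries.

Variable b : R.
Hypothesis b_range : -1 <= b <= 1.

Let f : R -> R := PSeries (binom_coef b).
Let df : R -> R := PSeries (PS_derive (binom_coef b)).

Lemma binom_inside (y : R) : Rabs y < 1 -> Rbar_lt (Rabs y) (CV_radius (binom_coef b)).
Proof. intro Hy. apply (Rbar_lt_le_trans _ 1); [exact Hy | exact (binom_radius b b_range)]. Qed.

Lemma binom_ode (y : R) : Rabs y < 1 -> (1 - y) * df y = - b * f y.
Proof.
  intro Hy.
  assert (Hdf : is_series (fun n => binom_coef b n * (INR n - b) * y ^ n) (df y)).
  { eapply is_series_ext; [|apply PSeries_inside; rewrite CV_radius_derive; now apply binom_inside].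
    intro n. unfold PS_derive. now rewrite binom_coef_succ. }
  assert (Hydf : is_series (fun n => INR n * binom_coef b n * y ^ n) (y * df y)).
  { apply is_series_decr_1. cbv beta.
    match goal with |- is_series _ ?l => replace l with (scal y (df y)) end;
      [|unfold plus, opp, scal; simpl; unfold mult; simpl; ring].
    eapply is_series_ext; [|exact (is_series_scal_l y _ _ Hdf)].
    intro n. change (y ^ S n) with (y * y ^ n). rewrite binom_coef_succ.
    unfold scal; simpl; unfold mult; simpl. ring. }
  assert (Hf : is_series (fun n => - b * (binom_coef b n * y ^ n)) (- b * f y)).
  { apply (@is_series_scal_l R_AbsRing R_NormedModule). apply PSeries_inside, binom_inside, Hy. }
  assert (Hdiff := is_series_minus _ _ _ _ Hdf Hydf).
  rewrite <- (is_series_unique _ _ Hf).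
  replace ((1 - y) * df y) with (plus (df y) (opp (y * df y))) by (unfold plus, opp; simpl; ring).
  symmetry. apply is_series_unique. eapply is_series_ext; [|exact Hdiff].
  intro n. unfold plus, opp; simpl. ring.
Qed.

Lemma binom_normalized_derivative (y : R) :
  Rabs y < 1 -> derivable_pt_lim (fun z => f z * Rpower (1 - z) (- b)) y 0.
Proof.
  intro Hy. assert (Hy1 : 0 < 1 - y) by (apply Rabs_def2 in Hy; lra).
  assert (Hdf : derivable_pt_lim f y (df y)).
  { apply is_derive_Reals, is_derive_PSeries, binom_inside, Hy. }
  assert (Hpow : derivable_pt_lim (fun z => Rpower (1 - z) (- b)) y
                   (- b * Rpower (1 - y) (- b - 1) * -1)).
  { apply (derivable_pt_lim_comp (fun z => 1 - z) (fun w => Rpower w (- b))).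
    - replace (-1) with (0 - 1) by ring.
      apply (derivable_pt_lim_minus (fct_cte 1) id);
        [apply derivable_pt_lim_const | apply derivable_pt_lim_id].
    - now apply derivable_pt_lim_power. }
  replace 0 with (df y * Rpower (1 - y) (- b) + f y * (- b * Rpower (1 - y) (- b - 1) * -1));
    [exact (derivable_pt_lim_mult _ _ _ _ _ Hdf Hpow)|].
  assert (Hsplit : Rpower (1 - y) (- b) = (1 - y) * Rpower (1 - y) (- b - 1)).
  { replace (- b) with ((- b - 1) + 1) at 1 by ring. rewrite Rpower_plus, Rpower_1 by lra. ring. }
  rewrite Hsplit.
  replace (df y * ((1 - y) * Rpower (1 - y) (- b - 1)))
    with ((1 - y) * df y * Rpower (1 - y) (- b - 1)) by ring.
  rewrite binom_ode by exact Hy. ring.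
Qed.

Lemma binomial_series (x : R) :
  Rabs x < 1 -> is_series (fun k => binom_coef b k * x ^ k) (Rpower (1 - x) b).
Proof.
  intro Hx. assert (Hx1 : 0 < 1 - x) by (apply Rabs_def2 in Hx; lra).
  assert (Hconst := zero_derivative_constant _ x binom_normalized_derivative Hx).
  cbv beta in Hconst.
  replace (f 0 * Rpower (1 - 0) (- b)) with 1 in Hconst
    by (unfold f; rewrite PSeries_0, Rminus_0_r, Rpower_Ropp, Rpower_base_1; simpl; field).
  replace (Rpower (1 - x) b) with (f x).
  - now apply PSeries_inside, binom_inside.
  - rewrite Rpower_Ropp in Hconst.
    assert (0 < Rpower (1 - x) b) by apply Rpower_pos.
    apply (Rmult_eq_reg_r (/ Rpower (1 - x) b)); [|apply Rinv_neq_0_compat; lra].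
    rewrite Hconst, Rinv_r; lra.
Qed.

End BinomialSeries.

(** Abel's theorem for nonnegative coefficients *)

Lemma pow_antimono (x : R) (k N : nat) : 0 <= x <= 1 -> (k <= N)%nat -> x ^ N <= x ^ k.
Proof.
  intros Hx Hk. replace N with (k + (N - k))%nat by lia. rewrite pow_add.
  pose proof (pow_le x k (proj1 Hx)). pose proof (pow_incr x 1 (N - k) Hx).
  rewrite pow1 in *. nra.
Qed.

Lemma scaled_partial_sum_le (p : nat -> R) (x : R) (N : nat) :
  (forall k, 0 <= p k) -> 0 <= x <= 1 ->
  x ^ N * sum_f_R0 p N <= sum_f_R0 (fun k => p k * x ^ k) N.
Proof.
  intros Hp Hx. rewrite scal_sum. apply sum_Rle. intros k Hk.
  apply Rmult_le_compat_l; [apply Hp | now apply pow_antimono].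
Qed.

Lemma nonneg_abel (p : nat -> R) (F : R -> R) (L : R) :
  (forall k, 0 <= p k) ->
  (forall x, 0 <= x < 1 -> is_series (fun k => p k * x ^ k) (F x)) ->
  (forall x, 0 <= x < 1 -> F x <= L) ->
  (forall eps, 0 < eps -> exists x, 0 <= x < 1 /\ L - eps <= F x) ->
  is_series p L.
Proof.
  intros Hp HF Hupper Hsup.
  (* [x^N S_N <= F x <= L] on [0, 1), and [x^N S_N -> S_N] as [x -> 1-]. *)
  assert (Hpartial : forall N, sum_f_R0 p N <= L).
  { intro N. set (S := sum_f_R0 p N).
    assert (Hbelow : at_left 1 (fun x => x ^ N * S <= L)).
    { exists (mkposreal 1 Rlt_0_1). intros x Hball Hx1.
      assert (Hx : 0 <= x < 1).
      { change (Rabs (x - 1) < 1) in Hball. apply Rabs_def2 in Hball. lra. }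
      eapply Rle_trans; [apply scaled_partial_sum_le; [exact Hp | lra]|].
      eapply Rle_trans; [|apply (Hupper x Hx)].
      apply (nonneg_partial_sum_le (fun k => p k * x ^ k)); [|now apply HF].
      intro k. apply Rmult_le_pos; [apply Hp | apply pow_le; lra]. }
    assert (Hlim : filterlim (fun x => x ^ N * S) (at_left 1) (locally S)).
    { assert (Hcont : continuous (fun x => x ^ N * S) 1)
        by (apply (@ex_derive_continuous R_AbsRing R_NormedModule); auto_derive; exact I).
      unfold continuous in Hcont. cbv beta in Hcont. rewrite pow1, Rmult_1_l in Hcont.
      exact (filterlim_filter_le_1 _ (filter_le_within _) Hcont). }
    exact (filterlim_le (fun x => x ^ N * S) (fun _ => L) S L Hbelow Hlim (filterlim_const L)). }
  (* Conversely [F x <= sum p_k], so [L <= sum p_k]. *)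
  destruct (nonneg_bounded_series p Hp L Hpartial) as [Hex Hle].
  assert (Hge : L <= Series p).
  { apply Rle_plus_epsilon. intros eps Heps.
    destruct (Hsup eps Heps) as [x [Hx HFx]].
    enough (F x <= Series p) by lra.
    rewrite <- (is_series_unique _ _ (HF x Hx)). apply Series_le; [|exact Hex].
    intro k. pose proof (Hp k). pose proof (pow_antimono x 0 k ltac:(lra) ltac:(lia)).
    pose proof (pow_le x k (proj1 Hx)). simpl in *. nra. }
  replace L with (Series p) by lra. now apply Series_correct.
Qed.

Definition one_minus_pow (b x : R) : R := 1 - Rpower (1 - x) b.
Definition binom_compl (b : R) (k : nat) : R := ps_one k - binom_coef b k.

Lemma binom_compl_series (b x : R) :
  -1 <= b <= 1 -> Rabs x < 1 -> is_series (fun k => binom_compl b k * x ^ k) (one_minus_pow b x).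
Proof.
  intros Hb Hx.
  eapply is_series_ext; [|exact (is_series_minus _ _ _ _ (ps_one_series x) (binomial_series b Hb x Hx))].
  intro k. unfold binom_compl, plus, opp. simpl. ring.
Qed.

Lemma binom_compl_0 (b : R) : binom_compl b 0 = 0.
Proof. unfold binom_compl. simpl. ring. Qed.

Lemma binom_compl_1 (b : R) : binom_compl b 1 = b.
Proof. unfold binom_compl. rewrite binom_coef_1. simpl. ring. Qed.

Lemma binom_compl_nonneg (b : R) (k : nat) : 0 <= b <= 1 -> 0 <= binom_compl b k.
Proof.
  intro Hb. unfold binom_compl. destruct k as [|k]; [simpl; lra|].
  pose proof (binom_coef_nonpos b (S k) Hb ltac:(lia)). cbn [ps_one]. lra.
Qed.

Lemma one_minus_pow_lt_1 (b x : R) : one_minus_pow b x < 1.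
Proof. unfold one_minus_pow. pose proof (Rpower_pos (1 - x) b). lra. Qed.

Lemma one_minus_pow_range (b x : R) : 0 <= b -> 0 <= x < 1 -> 0 <= one_minus_pow b x < 1.
Proof.
  intros Hb Hx. split; [|apply one_minus_pow_lt_1].
  unfold one_minus_pow. rewrite <- (Rpower_base_1 b) at 1.
  enough (Rpower (1 - x) b <= Rpower 1 b) by lra.
  apply Rle_Rpower_l; lra.
Qed.

Definition mobius (r y : R) : R := (1 - r) * y / (1 - r * y).
Definition mobius_coef (r : R) (j : nat) : R :=
  match j with O => 0 | S j' => (1 - r) * r ^ j' end.

Lemma mobius_series (r y : R) :
  Rabs r <= 1 -> Rabs y < 1 -> is_series (fun j => mobius_coef r j * y ^ j) (mobius r y).
Proof.
  intros Hr Hy.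
  assert (Hry : Rabs (r * y) < 1).
  { rewrite Rabs_mult. pose proof (Rabs_pos r). pose proof (Rabs_pos y). nra. }
  assert (Hgeom := is_series_scal_l ((1 - r) * y) _ _ (is_series_geom _ Hry)).
  apply is_series_decr_1. cbv beta.
  match goal with |- is_series _ ?l => replace l with (scal ((1 - r) * y) (/ (1 - r * y))) end.
  - eapply is_series_ext; [|exact Hgeom].
    intro n. unfold scal; simpl; unfold mult; simpl. rewrite Rpow_mult_distr. ring.
  - unfold mobius, scal, plus, opp; simpl; unfold mult; simpl. field.
    apply Rabs_def2 in Hry. lra.
Qed.

Lemma mobius_coef_nonneg (r : R) (j : nat) : 0 <= r <= 1 -> 0 <= mobius_coef r j.
Proof.
  intro Hr. destruct j as [|j]; simpl; [lra|].
  apply Rmult_le_pos; [lra | apply pow_le; lra].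
Qed.

Lemma mobius_coef_pos (r : R) (j : nat) : 0 < r < 1 -> (1 <= j)%nat -> 0 < mobius_coef r j.
Proof.
  intros Hr Hj. destruct j as [|j]; [lia|]. simpl.
  apply Rmult_lt_0_compat; [lra | apply pow_lt; lra].
Qed.

Lemma mobius_range (r y : R) : 0 <= r < 1 -> 0 <= y < 1 -> 0 <= mobius r y < 1.
Proof.
  intros Hr Hy. unfold mobius. assert (0 < 1 - r * y) by nra.
  split; [apply Rdiv_le_0_compat; nra|].
  apply Rmult_lt_reg_r with (1 - r * y); [lra|].
  unfold Rdiv. rewrite Rmult_assoc, Rinv_l by lra. nra.
Qed.

Lemma one_minus_mobius (r s : R) :
  0 <= r < 1 -> 0 < s -> 1 - mobius r (1 - s) = s / (1 - r + r * s).
Proof. intros Hr Hs. unfold mobius. field. nra. Qed.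

(** The coefficients of the symbol *)

(* With [r = 1 / (lambda + 1)]: [q_coef] are the coefficients of
   [Q(u) = mobius r (1 - (1 - u)^alpha)], [p_coef] those of
   [P(u) = 1 - (1 - Q(u))^mu], and [ml_coef = r^mu (1 - P)] those of the symbol. *)
Definition q_coef (alpha lambda : R) : nat -> R :=
  ps_comp (binom_compl alpha) (mobius_coef (/ (lambda + 1))).
Definition p_coef (alpha mu lambda : R) : nat -> R :=
  ps_comp (q_coef alpha lambda) (binom_compl mu).
Definition ml_coef (alpha mu lambda : R) (k : nat) : R :=
  Rpower (lambda + 1) (- mu) * (ps_one k - p_coef alpha mu lambda k).

Section Symbol.

Variables alpha mu lambda : R.
Hypothesis alpha_range : 0 < alpha <= 1.
Hypothesis mu_range : 0 < mu <= 1.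
Hypothesis lambda_pos : 0 < lambda.

Local Notation r := (/ (lambda + 1)).
Let q_fun (u : R) : R := mobius r (one_minus_pow alpha u).
Let p_fun (u : R) : R := one_minus_pow mu (q_fun u).

Lemma r_range : 0 < r < 1.
Proof.
  split; [apply Rinv_0_lt_compat; lra|].
  rewrite <- Rinv_1. apply Rinv_lt_contravar; lra.
Qed.

Lemma q_fun_range (x : R) : 0 <= x < 1 -> 0 <= q_fun x < 1.
Proof.
  intro Hx. pose proof r_range.
  apply mobius_range; [lra | apply one_minus_pow_range; lra].
Qed.

Lemma q_series (u : R) :
  Rabs u < 1 -> is_series (fun k => q_coef alpha lambda k * u ^ k) (q_fun u).
Proof.
  pose proof r_range as Hr.
  apply (ps_comp_series _ (one_minus_pow alpha) _ (mobius r)).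
  - intro k. apply binom_compl_nonneg. lra.
  - apply binom_compl_0.
  - intros x Hx. apply binom_compl_series; [lra | exact Hx].
  - intro j. apply mobius_coef_nonneg. lra.
  - intros y Hy. apply mobius_series; [rewrite Rabs_pos_eq; lra | exact Hy].
  - intros x _. apply one_minus_pow_lt_1.
Qed.

Lemma q_coef_nonneg (k : nat) : 0 <= q_coef alpha lambda k.
Proof.
  pose proof r_range.
  apply ps_comp_nonneg; intro j; [apply binom_compl_nonneg | apply mobius_coef_nonneg]; lra.
Qed.

Lemma q_coef_0 : q_coef alpha lambda 0 = 0.
Proof. apply ps_comp_0. Qed.

(* The [k]-th coefficient contains the term [mobius_coef r k * alpha^k > 0]. *)
Lemma q_coef_pos (k : nat) : (1 <= k)%nat -> 0 < q_coef alpha lambda k.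
Proof.
  intro Hk. pose proof r_range.
  eapply Rlt_le_trans; [|apply (ps_comp_ge _ (mobius_coef r)) with (j := k)];
    [| intro j; apply binom_compl_nonneg; lra | intro j; apply mobius_coef_nonneg; lra | lia].
  rewrite (ps_pow_diag _ (binom_compl_0 alpha)), binom_compl_1.
  apply Rmult_lt_0_compat; [now apply mobius_coef_pos | apply pow_lt; lra].
Qed.

Lemma p_series (u : R) :
  Rabs u < 1 -> is_series (fun k => p_coef alpha mu lambda k * u ^ k) (p_fun u).
Proof.
  apply (ps_comp_series _ q_fun _ (one_minus_pow mu)).
  - exact q_coef_nonneg.
  - exact q_coef_0.
  - exact q_series.
  - intro j. apply binom_compl_nonneg. lra.
  - intros y Hy. apply binom_compl_series; [lra | exact Hy].
  - intros x Hx. now apply q_fun_range.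
Qed.

Lemma p_coef_nonneg (k : nat) : 0 <= p_coef alpha mu lambda k.
Proof.
  apply ps_comp_nonneg; [exact q_coef_nonneg | intro j; apply binom_compl_nonneg; lra].
Qed.

Lemma p_coef_0 : p_coef alpha mu lambda 0 = 0.
Proof. unfold p_coef. rewrite ps_comp_0. apply binom_compl_0. Qed.

(* The [k]-th coefficient contains the term [binom_compl mu 1 * q_k = mu q_k > 0]. *)
Lemma p_coef_pos (k : nat) : (1 <= k)%nat -> 0 < p_coef alpha mu lambda k.
Proof.
  intro Hk.
  eapply Rlt_le_trans; [|apply (ps_comp_ge _ (binom_compl mu)) with (j := 1%nat)];
    [| exact q_coef_nonneg | intro j; apply binom_compl_nonneg; lra | exact Hk].
  rewrite ps_pow_one, binom_compl_1.
  apply Rmult_lt_0_compat; [lra | now apply q_coef_pos].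
Qed.

(* [p_fun] approaches 1 as [u -> 1]: choosing [(1 - x)^alpha = s] small makes
   [1 - q_fun x = s / (1 - r + r s)] small. *)
Lemma p_fun_sup (eps : R) : 0 < eps -> exists x, 0 <= x < 1 /\ 1 - eps <= p_fun x.
Proof.
  intro Heps. pose proof r_range as Hr.
  set (d := Rpower eps (/ mu)).
  assert (Hd : 0 < d) by apply Rpower_pos.
  set (s := Rmin (1 / 2) ((1 - r) * d)).
  assert (Hs : 0 < s <= 1 / 2).
  { split; [apply Rmin_pos; nra | apply Rmin_l]. }
  set (w := Rpower s (/ alpha)).
  assert (Hw : 0 < w <= 1).
  { split; [apply Rpower_pos|]. rewrite <- (Rpower_base_1 (/ alpha)).
    apply Rle_Rpower_l; [left; apply Rinv_0_lt_compat|]; lra. }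
  exists (1 - w). split; [lra|].
  assert (Hws : Rpower (1 - (1 - w)) alpha = s).
  { replace (1 - (1 - w)) with w by ring. unfold w.
    rewrite Rpower_mult, Rinv_l, Rpower_1; lra. }
  unfold p_fun, q_fun, one_minus_pow. rewrite Hws.
  rewrite one_minus_mobius by lra.
  assert (Hsmall : s / (1 - r + r * s) <= d).
  { apply Rmult_le_reg_r with (1 - r + r * s); [nra|].
    unfold Rdiv. rewrite Rmult_assoc, Rinv_l by nra.
    assert (s <= (1 - r) * d) by apply Rmin_r.
    assert (0 <= d * (r * s)) by (apply Rmult_le_pos; [|apply Rmult_le_pos]; lra).
    lra. }
  assert (Rpower (s / (1 - r + r * s)) mu <= eps).
  { replace eps with (Rpower d mu)
      by (unfold d; rewrite Rpower_mult, Rinv_l, Rpower_1; lra).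
    apply Rle_Rpower_l; [lra|]. split; [apply Rdiv_lt_0_compat; nra | exact Hsmall]. }
  lra.
Qed.

Lemma p_coef_sum : is_series (p_coef alpha mu lambda) 1.
Proof.
  apply (nonneg_abel _ p_fun).
  - exact p_coef_nonneg.
  - intros x Hx. apply p_series. rewrite Rabs_pos_eq; lra.
  - intros x _. left. apply one_minus_pow_lt_1.
  - exact p_fun_sup.
Qed.

Lemma gen_fun_factor (u : R) :
  gen_fun alpha mu lambda u = Rpower (lambda + 1) (- mu) * (1 - p_fun u).
Proof.
  pose proof r_range as Hr.
  set (s := Rpower (1 - u) alpha). assert (Hs : 0 < s) by apply Rpower_pos.
  unfold gen_fun, p_fun, q_fun, one_minus_pow. fold s.
  rewrite one_minus_mobius by lra.
  replace (s / (lambda + s)) with (r * (s / (1 - r + r * s))) by (field; split; nra).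
  rewrite <- Rpower_mult_distr by (try apply Rdiv_lt_0_compat; nra).
  rewrite Rpower_inv_base by lra. ring.
Qed.

Lemma ml_coef_gen : is_gen_coeffs alpha mu lambda (ml_coef alpha mu lambda).
Proof.
  intros u Hu. rewrite gen_fun_factor.
  eapply is_series_ext;
    [|exact (is_series_scal_l (Rpower (lambda + 1) (- mu)) _ _
               (is_series_minus _ _ _ _ (ps_one_series u) (p_series u Hu)))].
  intro k. unfold ml_coef, scal, plus, opp; simpl; unfold mult; simpl. ring.
Qed.

Lemma ml_coef_0 : ml_coef alpha mu lambda 0 = Rpower (lambda + 1) (- mu).
Proof. unfold ml_coef. rewrite p_coef_0. simpl. ring. Qed.

Lemma ml_coef_neg (k : nat) : (1 <= k)%nat -> ml_coef alpha mu lambda k < 0.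
Proof.
  intro Hk. unfold ml_coef. destruct k as [|k]; [lia|]. simpl ps_one.
  pose proof (p_coef_pos (S k) Hk). pose proof (Rpower_pos (lambda + 1) (- mu)). nra.
Qed.

Lemma ml_coef_sum : is_series (ml_coef alpha mu lambda) 0.
Proof.
  assert (Hdiff := is_series_scal_l (Rpower (lambda + 1) (- mu)) _ _
                     (is_series_minus _ _ _ _ ps_one_sum p_coef_sum)).
  match type of Hdiff with is_series _ ?l => replace l with 0 in Hdiff
    by (unfold scal, plus, opp; simpl; unfold mult; simpl; ring) end.
  eapply is_series_ext; [|exact Hdiff].
  intro k. unfold ml_coef, scal, plus, opp; simpl; unfold mult; simpl. ring.
Qed.

End Symbol.

Lemma CV_radius_of_ex_series (a : nat -> R) (x : R) :
  ex_series (fun k => a k * x ^ k) -> Rbar_le (Rabs x) (CV_radius a).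
Proof.
  intro Hex. apply Rbar_not_lt_le. intro Hlt.
  exact (CV_disk_outside a x Hlt (ex_series_lim_0 _ Hex)).
Qed.

Lemma power_series_coef_unique (a b : nat -> R) (f : R -> R) :
  (forall u, Rabs u < 1 -> is_series (fun k => a k * u ^ k) (f u)) ->
  (forall u, Rabs u < 1 -> is_series (fun k => b k * u ^ k) (f u)) ->
  forall n, a n = b n.
Proof.
  intros Ha Hb n.
  assert (Hhalf : Rabs (1 / 2) < 1) by (rewrite Rabs_pos_eq; lra).
  assert (Hradius : forall c, (forall u, Rabs u < 1 -> is_series (fun k => c k * u ^ k) (f u)) ->
                         Rbar_lt 0 (CV_radius c)).
  { intros c Hc. apply (Rbar_lt_le_trans _ (Rabs (1 / 2))).
    - simpl. rewrite Rabs_pos_eq; lra.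
    - apply CV_radius_of_ex_series. exists (f (1 / 2)). now apply Hc. }
  apply PSeries_ext_recip; [now apply Hradius | now apply Hradius|].
  exists (mkposreal 1 Rlt_0_1). intros y Hy.
  change (Rabs (y - 0) < 1) in Hy. rewrite Rminus_0_r in Hy.
  rewrite (is_pseries_unique a y (f y)), (is_pseries_unique b y (f y)); [reflexivity | |];
    apply is_pseries_R; auto.
Qed.

Lemma circ_mx_below (c : nat -> R) (m n : Z) : (n < m)%Z -> circ_mx c m n = 0.
Proof. intro Hnm. unfold circ_mx. destruct (Z.leb_spec m n); [lia | reflexivity]. Qed.

Lemma circ_mx_row (c : nat -> R) (m : Z) (j : nat) : circ_mx c m (m + Z.of_nat j) = c j.
Proof. unfold circ_mx. destruct (Z.leb_spec m (m + Z.of_nat j)); [f_equal; lia | lia]. Qed.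

Lemma kron_row (m : Z) (j : nat) : kron m (m + Z.of_nat j) = ps_one j.
Proof. unfold kron. destruct (Z.eq_dec m (m + Z.of_nat j)), j; simpl; reflexivity || lia. Qed.

Lemma kron_off (m n : Z) : m <> n -> kron m n = 0.
Proof. intro Hmn. unfold kron. now destruct (Z.eq_dec m n). Qed.

(** Sign pattern of a Laplacian generating sequence *)

Section SignPattern.

Variable c : nat -> R.
Hypothesis c_0_pos : 0 < c 0%nat.
Hypothesis c_nonpos : forall k, (1 <= k)%nat -> c k <= 0.
Hypothesis c_sum : is_series c 0.

Lemma circ_good_laplacian : good_laplacian (circ_mx c).
Proof.
  split; [|split; [|split]].
  - apply circ_mx_below.
  - intro m. eapply is_series_ext; [|exact c_sum]. intro j. now rewrite circ_mx_row.
  - intro m. replace m with (m + Z.of_nat 0)%Z at 2 by lia. now rewrite circ_mx_row.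
  - intros m n Hmn. destruct (Z.le_gt_cases m n) as [Hle | Hgt].
    + replace n with (m + Z.of_nat (Z.to_nat (n - m)))%Z in * by lia.
      rewrite circ_mx_row. apply c_nonpos.
      destruct (Z.to_nat (n - m)); [contradict Hmn; lia | lia].
    + rewrite circ_mx_below by lia. lra.
Qed.

Lemma circ_transition : transition_mx (fun m n => kron m n - circ_mx c m n / c 0%nat).
Proof.
  assert (Hinv : 0 < / c 0%nat) by now apply Rinv_0_lt_compat.
  split; [|split].
  - intros m n Hnm. rewrite circ_mx_below, kron_off by lia. unfold Rdiv. ring.
  - intros m n. destruct (Z.le_gt_cases m n) as [Hle | Hgt].
    + replace n with (m + Z.of_nat (Z.to_nat (n - m)))%Z by lia.
      rewrite kron_row, circ_mx_row. destruct (Z.to_nat (n - m)) as [|k]; simpl.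
      * right. field. lra.
      * pose proof (c_nonpos (S k) ltac:(lia)). unfold Rdiv. nra.
    + rewrite circ_mx_below, kron_off by lia. right. unfold Rdiv. ring.
  - intro m.
    assert (Hrow := is_series_minus _ _ _ _ ps_one_sum (is_series_scal_r (/ c 0%nat) _ _ c_sum)).
    match type of Hrow with is_series _ ?l => replace l with 1 in Hrow by (unfold plus, opp; simpl; ring) end.
    eapply is_series_ext; [|exact Hrow]. intro j.
    rewrite kron_row, circ_mx_row. unfold plus, opp; simpl. unfold Rdiv. ring.
Qed.

Lemma circ_transition_above_pos :
  (forall k, (1 <= k)%nat -> c k < 0) ->
  forall m n, (m < n)%Z -> 0 < kron m n - circ_mx c m n / c 0%nat.
Proof.
  intros c_neg m n Hmn. assert (Hinv : 0 < / c 0%nat) by now apply Rinv_0_lt_compat.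
  replace n with (m + Z.of_nat (Z.to_nat (n - m)))%Z by lia.
  rewrite kron_row, circ_mx_row. destruct (Z.to_nat (n - m)) as [|k] eqn:Hk; [lia|].
  pose proof (c_neg (S k) ltac:(lia)). simpl. unfold Rdiv. nra.
Qed.

End SignPattern.

Theorem mainTheorem16 (alpha mu lambda : R)
  (Halpha : 0 < alpha <= 1) (Hmu : 0 < mu <= 1) (Hlambda : 0 < lambda) :
  (exists c : nat -> R, is_gen_coeffs alpha mu lambda c) /\
  (forall c : nat -> R, is_gen_coeffs alpha mu lambda c ->
     c 0%nat = Rpower (lambda + 1) (- mu) /\ 0 < c 0%nat /\
     (forall k : nat, (1 <= k)%nat -> c k < 0) /\
     is_series c 0 /\
     good_laplacian (circ_mx c) /\
     transition_mx (fun m n => kron m n - circ_mx c m n / c 0%nat) /\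
     (forall m n : Z, (m < n)%Z -> 0 < kron m n - circ_mx c m n / c 0%nat)).
Proof.
  assert (Hml := ml_coef_gen alpha mu lambda Halpha Hmu Hlambda).
  split; [now exists (ml_coef alpha mu lambda)|].
  intros c Hc.
  (* [c] is the explicit coefficient sequence [ml_coef], whose signs are known. *)
  assert (Hcoef := power_series_coef_unique _ _ _ Hc Hml).
  assert (Hc0 : c 0%nat = Rpower (lambda + 1) (- mu)) by (rewrite Hcoef; apply ml_coef_0).
  assert (Hc0_pos : 0 < c 0%nat) by (rewrite Hc0; apply Rpower_pos).
  assert (Hneg : forall k, (1 <= k)%nat -> c k < 0)
    by (intros k Hk; rewrite Hcoef; now apply ml_coef_neg).
  assert (Hnonpos : forall k, (1 <= k)%nat -> c k <= 0) by (intros k Hk; left; now apply Hneg).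
  assert (Hsum : is_series c 0).
  { apply (is_series_ext (ml_coef alpha mu lambda)); [intro k; now rewrite Hcoef|].
    now apply ml_coef_sum. }
  do 4 (split; [assumption|]).
  split; [now apply circ_good_laplacian|].
  split; [now apply circ_transition|].
  now apply circ_transition_above_pos.
Qed.
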